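(* For any non-negative, non-increasing stepsize sequence $\{\alpha(t)\}$, any $\eta>0$ and all $T\in\mathbb{N}$, the iterates of the distributed regularized primal-dual algorithm described in the context satisfy \[ \sum_{t=0}^{T-1}\sum_{i=1}^n\alpha(t)\eta\|\lambda_i(t)\|^2-\sum_{t=0}^{T-1}\sum_{i=1}^n\alpha^2(t)\|\nabla_\lambda L_i(x_i(t),\lambda_i(t))\|^2\le\sum_{t=0}^{T-1}\sum_{i=1}^n2\alpha(t)\langle g(x_i(t)),\lambda_i(t)\rangle. \]
   Context: Norms are Euclidean. Problem data: $f_i:\mathbb{R}^d\to\mathbb{R}$, $i=1,\dots,n$, and $g=(g_1,\dots,g_m)^T$ with $g_k:\mathbb{R}^d\to\mathbb{R}$, all convex on $\mathbb{B}_d(R)=\{x:\|x\|\le R\}$ with subgradients bounded by $L$ there. $W\in\mathbb{R}^{n\times n}$ is a doubly stochastic matrix (supported on the edges of a connected graph). Regularized Lagrangian of agent $i$: $L_i(x,\lambda)=f_i(x)+\langle\lambda,g(x)\rangle-\frac{\eta}{2}\|\lambda\|^2$, with subgradients $\nabla_xL_i(x,\lambda)=\nabla f_i(x)+\sum_{k=1}^m\lambda_k\nabla g_k(x)$ and $\nabla_\lambda L_i(x,\lambda)=g(x)-\eta\lambda$. Algorithm: $x_i(0)=0$, $\lambda_i(0)=0$; for $t=0,1,2,\dots$: $y_i(t)=x_i(t)-\alpha(t)\nabla_xL_i(x_i(t),\lambda_i(t))$, $\gamma_i(t)=\lambda_i(t)+\alpha(t)\nabla_\lambda L_i(x_i(t),\lambda_i(t))$,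 $x_i(t+1)=\Pi_{\mathbb{B}_d(R)}(\sum_j W_{ij}y_j(t))$, $\lambda_i(t+1)=\Pi_{\mathbb{R}^m_+}(\sum_jW_{ij}\gamma_j(t))$, where $\Pi$ denotes Euclidean projection. *)

From mathcomp Require Import all_boot all_order all_algebra.
Set Implicit Arguments. Unset Strict Implicit. Unset Printing Implicit Defensive.
Import Order.TTheory GRing.Theory Num.Theory.
Local Open Scope ring_scope.

Section Defs.
Variable R : rcfType.

Definition dotv (k : nat) (u v : 'cV[R]_k) : R := \sum_(l < k) u l 0 * v l 0.
Definition normv (k : nat) (u : 'cV[R]_k) : R := Num.sqrt (dotv u u).

Definition in_ball (d : nat) (Rad : R) (x : 'cV[R]_d) : Prop := normv x <= Rad.
Definition in_orthant (m : nat) (x : 'cV[R]_m) : Prop := forall k : 'I_m, 0 <= x k 0.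

Definition is_proj (k : nat) (C : 'cV[R]_k -> Prop) (P : 'cV[R]_k -> 'cV[R]_k) : Prop :=
  forall y, C (P y) /\ (forall z, C z -> normv (y - P y) <= normv (y - z)).

Definition convex_on_ball (d : nat) (Rad : R) (h : 'cV[R]_d -> R) : Prop :=
  forall x y (a : R), in_ball Rad x -> in_ball Rad y -> 0 <= a -> a <= 1 ->
    h (a *: x + (1 - a) *: y) <= a * h x + (1 - a) * h y.
Definition bounded_subgrad_on_ball (d : nat) (Rad L : R)
    (h : 'cV[R]_d -> R) (dh : 'cV[R]_d -> 'cV[R]_d) : Prop :=
  forall x, in_ball Rad x ->
    normv (dh x) <= L /\ (forall y, in_ball Rad y -> h x + dotv (dh x) (y - x) <= h y).

Definition doubly_stochastic (n : nat) (W : 'M[R]_n) : Prop :=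
  (forall i j, 0 <= W i j) /\
  (forall i, \sum_(j < n) W i j = 1) /\ (forall j, \sum_(i < n) W i j = 1).

Definition supported_on_connected_graph (n : nat) (W : 'M[R]_n) (e : rel 'I_n) : Prop :=
  (forall i j, e i j = e j i) /\ (forall i j, connect e i j) /\
  (forall i j, W i j != 0 -> i != j -> e i j).

Variables (n d m : nat).
Variables (df : 'I_n -> 'cV[R]_d -> 'cV[R]_d)
          (g : 'I_m -> 'cV[R]_d -> R)
          (dg : 'I_m -> 'cV[R]_d -> 'cV[R]_d).

Definition gvec (x : 'cV[R]_d) : 'cV[R]_m := \col_(k < m) g k x.

Definition gradLx (eta : R) (i : 'I_n) (x : 'cV[R]_d) (lam : 'cV[R]_m) : 'cV[R]_d :=
  df i x + \sum_(k < m) lam k 0 *: dg k x.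
Definition gradLlam (eta : R) (i : 'I_n) (x : 'cV[R]_d) (lam : 'cV[R]_m) : 'cV[R]_m :=
  gvec x - eta *: lam.

Variables (eta : R) (alpha : nat -> R) (W : 'M[R]_n)
          (PB : 'cV[R]_d -> 'cV[R]_d) (PP : 'cV[R]_m -> 'cV[R]_m).

Fixpoint iterates (t : nat) : 'I_n -> 'cV[R]_d * 'cV[R]_m :=
  match t with
  | 0 => fun _ => (0, 0)
  | t'.+1 =>
    let s := iterates t' in
    let y := fun j => (s j).1 - alpha t' *: gradLx eta j (s j).1 (s j).2 in
    let gam := fun j => (s j).2 + alpha t' *: gradLlam eta j (s j).1 (s j).2 in
    fun i => (PB (\sum_(j < n) W i j *: y j), PP (\sum_(j < n) W i j *: gam j))
  end.

Definition xit (t : nat) (i : 'I_n) : 'cV[R]_d := (iterates t i).1.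
Definition lamit (t : nat) (i : 'I_n) : 'cV[R]_m := (iterates t i).2.

End Defs.

(* Only the dual recursion matters.  Projecting onto the orthant, a cone, is an
   orthogonal projection, so it does not increase norms, and averaging with a
   doubly stochastic matrix does not increase the total squared norm (Jensen).
   Hence E(t) = sum_i |lambda_i(t)|^2 satisfies
     E(t+1) <= sum_i |lambda_i(t) + alpha(t) grad_lambda L_i|^2
             = E(t) + sum_i (2 alpha <g, lambda> - 2 alpha eta |lambda|^2
                              + alpha^2 |grad_lambda L_i|^2).
   Telescoping from E(0) = 0 to E(T) >= 0 shows that these increments have
   nonnegative sum, which is stronger than the claim since alpha eta |lambda|^2 >= 0. *)

From mathcomp Require Import all_boot all_order all_algebra.
From mathcomp Require Import lra ring.
Set Implicit Arguments.
Unset Strict Implicit.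
Unset Printing Implicit Defensive.

Import Order.TTheory GRing.Theory Num.Theory.
Local Open Scope ring_scope.

Lemma ray_argmin1_eq (R : realFieldType) (a b : R) : 0 <= b ->
  (forall c : R, 0 <= c -> b - 2 * a <= c ^+ 2 * b - 2 * c * a) -> a = b.
Proof.
move=> b_ge0 ray_min; have := ray_min 0 (lexx 0); rewrite expr2 !(mulr0, mul0r) subr0 => a_ge.
have [b0 | b_neq0] := eqVneq b 0.
  by have := ray_min 2 (ler0n _ 2); rewrite b0 in a_ge *; lra.
have b_gt0 : 0 < b by rewrite lt_def b_neq0 b_ge0.
have c_ge0 : 0 <= a / b by rewrite divr_ge0 ?(ltW b_gt0) //; lra.
have := ray_min _ c_ge0.
have -> : (a / b) ^+ 2 * b - 2 * (a / b) * a = - (a ^+ 2 / b) by field.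
move=> le_sqr_div; have : b * (a ^+ 2 / b - 2 * a + b) <= 0 by rewrite pmulr_rle0 //; lra.
rewrite mulrDr mulrBr mulrCA divff // mulr1 => sqr_le0.
by apply/eqP; rewrite -subr_eq0 -sqrf_eq0 eq_le sqr_ge0 andbT; nra.
Qed.

Section DotProduct.
Variables (R : rcfType) (k : nat).
Implicit Types (u v w : 'cV[R]_k) (a : R).

Lemma dotvC u v : dotv u v = dotv v u.
Proof. by apply: eq_bigr => l _; rewrite mulrC. Qed.

Lemma dotvDl u v w : dotv (u + v) w = dotv u w + dotv v w.
Proof. by rewrite /dotv -big_split; apply: eq_bigr => l _; rewrite mxE mulrDl. Qed.

Lemma dotvZl a u v : dotv (a *: u) v = a * dotv u v.
Proof. by rewrite /dotv mulr_sumr; apply: eq_bigr => l _; rewrite mxE mulrA. Qed.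

Lemma dotvBl u v w : dotv (u - v) w = dotv u w - dotv v w.
Proof. by rewrite dotvDl -scaleN1r dotvZl mulN1r. Qed.

Lemma dotvZr a u v : dotv u (a *: v) = a * dotv u v.
Proof. by rewrite dotvC dotvZl dotvC. Qed.

Lemma dotvBr u v w : dotv u (v - w) = dotv u v - dotv u w.
Proof. by rewrite dotvC dotvBl !(dotvC u). Qed.

Lemma dotv0l v : dotv 0 v = 0.
Proof. by apply: big1 => l _; rewrite mxE mul0r. Qed.

Lemma dotv_suml (I : Type) (r : seq I) (P : pred I) (F : I -> 'cV[R]_k) v :
  dotv (\sum_(i <- r | P i) F i) v = \sum_(i <- r | P i) dotv (F i) v.
Proof. by elim/big_rec2: _ => [|i s' t _ <-]; rewrite ?dotv0l ?dotvDl. Qed.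

Lemma dotvv_ge0 u : 0 <= dotv u u.
Proof. by apply: sumr_ge0 => l _; rewrite -expr2 sqr_ge0. Qed.

Lemma normv_sq u : normv u ^+ 2 = dotv u u.
Proof. by rewrite sqr_sqrtr ?dotvv_ge0. Qed.

Lemma dotvv_sqrD u v : dotv (u + v) (u + v) = dotv u u + 2 * dotv v u + dotv v v.
Proof. by rewrite dotvDl !(dotvC _ (u + v)) !dotvDl (dotvC u v); ring. Qed.

Lemma dotvv_convex_comb_le n (w : 'I_n -> R) (v : 'I_n -> 'cV[R]_k) :
  (forall j, 0 <= w j) -> \sum_j w j = 1 ->
  dotv (\sum_j w j *: v j) (\sum_j w j *: v j) <= \sum_j w j * dotv (v j) (v j).
Proof.
move=> w_ge0 w_sum1.
set c : 'cV[R]_k := \sum_j w j *: v j.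
have cc u : dotv c u = \sum_j w j * dotv (v j) u.
  by rewrite dotv_suml; apply: eq_bigr => j _; rewrite dotvZl.
clearbody c.
have : 0 <= \sum_j w j * dotv (v j - c) (v j - c).
  by apply: sumr_ge0 => j _; rewrite mulr_ge0 ?dotvv_ge0.
have -> : \sum_j w j * dotv (v j - c) (v j - c) = \sum_j w j * dotv (v j) (v j)
    - 2 * (\sum_j w j * dotv (v j) c) + (\sum_j w j) * dotv c c.
  rewrite mulr_suml mulr_sumr -sumrB -big_split /=; apply: eq_bigr => j _.
  by rewrite dotvBl !dotvBr (dotvC c (v j)); ring.
by rewrite -cc w_sum1; lra.
Qed.

Lemma proj_cone_dotv_eq (C : 'cV[R]_k -> Prop) (P : 'cV[R]_k -> 'cV[R]_k) y :
  is_proj C P -> (forall (c : R) z, 0 <= c -> C z -> C (c *: z)) ->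
  dotv (P y) y = dotv (P y) (P y).
Proof.
move=> projP coneC; have [C_Py Pmin] := projP y; set p := P y in C_Py Pmin *.
apply: (@ray_argmin1_eq R _ _ (dotvv_ge0 p)) => c c_ge0.
have := Pmin _ (coneC c p c_ge0 C_Py).
rewrite -[p in y - p]scale1r /normv ler_sqrt ?dotvv_ge0 //.
rewrite !dotvBl !dotvBr !dotvZl !dotvZr (dotvC y) expr2 -!mulrA !mul1r; lra.
Qed.

Lemma proj_cone_dotvv_le (C : 'cV[R]_k -> Prop) (P : 'cV[R]_k -> 'cV[R]_k) y :
  is_proj C P -> (forall (c : R) z, 0 <= c -> C z -> C (c *: z)) ->
  dotv (P y) (P y) <= dotv y y.
Proof.
move=> projP coneC; have := dotvv_ge0 (y - P y).
by rewrite dotvBl !dotvBr (dotvC y) (proj_cone_dotv_eq y projP coneC); lra.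
Qed.

Lemma sum_dotvv_mix_le n (W : 'M[R]_n) (P : 'cV[R]_k -> 'cV[R]_k) (v : 'I_n -> 'cV[R]_k) :
  doubly_stochastic W -> (forall y, dotv (P y) (P y) <= dotv y y) ->
  \sum_i dotv (P (\sum_j W i j *: v j)) (P (\sum_j W i j *: v j)) <= \sum_j dotv (v j) (v j).
Proof.
move=> [W_ge0 [W_row W_col]] P_le.
apply: (@le_trans _ _ (\sum_i \sum_j W i j * dotv (v j) (v j))).
  apply: ler_sum => i _.
  exact: le_trans (P_le _) (dotvv_convex_comb_le _ (W_ge0 i) (W_row i)).
rewrite exchange_big /=; under eq_bigr do rewrite -mulr_suml W_col mul1r.
exact: lexx.
Qed.

End DotProduct.

Lemma in_orthantZ (R : rcfType) m (c : R) (z : 'cV[R]_m) :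
  0 <= c -> in_orthant z -> in_orthant (c *: z).
Proof. by move=> c_ge0 z_ge0 l; rewrite mxE mulr_ge0. Qed.

Lemma le_telescope (R : numDomainType) (u v : nat -> R) T :
  (forall t, u t.+1 <= u t + v t) -> u T <= u 0%N + \sum_(t < T) v t.
Proof.
move=> step; elim: T => [|T IH]; first by rewrite big_ord0 addr0.
by rewrite big_ord_recr addrA (le_trans (step T)) // lerD2r.
Qed.

Section DualEnergy.
Variables (R : rcfType) (n d m : nat) (df : 'I_n -> 'cV[R]_d -> 'cV[R]_d)
  (g : 'I_m -> 'cV[R]_d -> R) (dg : 'I_m -> 'cV[R]_d -> 'cV[R]_d)
  (eta : R) (alpha : nat -> R) (W : 'M[R]_n)
  (PB : 'cV[R]_d -> 'cV[R]_d) (PP : 'cV[R]_m -> 'cV[R]_m).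
Hypotheses (W_ds : doubly_stochastic W) (PP_le : forall y, dotv (PP y) (PP y) <= dotv y y).

Local Notation x := (xit df g dg eta alpha W PB PP).
Local Notation lam := (lamit df g dg eta alpha W PB PP).
Local Notation gradlam t i := (gradLlam g eta i (x t i) (lam t i)).

Definition dual_increment t i :=
  2 * alpha t * dotv (gvec g (x t i)) (lam t i) - 2 * (alpha t * eta * dotv (lam t i) (lam t i))
  + alpha t ^+ 2 * dotv (gradlam t i) (gradlam t i).

Lemma dual_energy_step t :
  \sum_i dotv (lam t.+1 i) (lam t.+1 i) <= \sum_i (dotv (lam t i) (lam t i) + dual_increment t i).
Proof.
have lam_next i : lam t.+1 i = PP (\sum_j W i j *: (lam t j + alpha t *: gradlam t j)) by [].
under eq_bigr do rewrite lam_next.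
apply: le_trans (sum_dotvv_mix_le _ W_ds PP_le) _.
apply: ler_sum => i _.
have grad_dot : dotv (gradlam t i) (lam t i) =
    dotv (gvec g (x t i)) (lam t i) - eta * dotv (lam t i) (lam t i).
  by rewrite dotvBl dotvZl.
by rewrite /dual_increment dotvv_sqrD !dotvZl dotvZr grad_dot expr2; lra.
Qed.

Lemma sum_dual_increment_ge0 T : 0 <= \sum_(t < T) \sum_i dual_increment t i.
Proof.
pose energy t := \sum_i dotv (lam t i) (lam t i).
have energy0 : energy 0%N = 0 by apply: big1 => i _; apply: dotv0l.
have energy_step t : energy t.+1 <= energy t + \sum_i dual_increment t i.
  by rewrite -big_split; apply: dual_energy_step.
have energy_ge0 : 0 <= energy T by apply: sumr_ge0 => i _; apply: dotvv_ge0.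
by have := le_telescope T energy_step; rewrite energy0 add0r; apply: le_trans.
Qed.

End DualEnergy.

Theorem lemma6 (R : rcfType) (n d m : nat) (Rad L : R)
  (f : 'I_n -> 'cV[R]_d -> R) (df : 'I_n -> 'cV[R]_d -> 'cV[R]_d)
  (g : 'I_m -> 'cV[R]_d -> R) (dg : 'I_m -> 'cV[R]_d -> 'cV[R]_d)
  (W : 'M[R]_n) (e : rel 'I_n)
  (PB : 'cV[R]_d -> 'cV[R]_d) (PP : 'cV[R]_m -> 'cV[R]_m)
  (alpha : nat -> R) (eta : R) (T : nat) :
  (forall i, convex_on_ball Rad (f i)) ->
  (forall i, bounded_subgrad_on_ball Rad L (f i) (df i)) ->
  (forall k, convex_on_ball Rad (g k)) ->
  (forall k, bounded_subgrad_on_ball Rad L (g k) (dg k)) ->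
  doubly_stochastic W ->
  supported_on_connected_graph W e ->
  is_proj (in_ball Rad) PB ->
  is_proj (@in_orthant R m) PP ->
  (forall t, 0 <= alpha t) ->
  (forall t, alpha t.+1 <= alpha t) ->
  0 < eta ->
  \sum_(t < T) \sum_(i < n) alpha t * eta * normv (lamit df g dg eta alpha W PB PP t i) ^+ 2
  - \sum_(t < T) \sum_(i < n) alpha t ^+ 2 *
      normv (gradLlam g eta i (xit df g dg eta alpha W PB PP t i)
                               (lamit df g dg eta alpha W PB PP t i)) ^+ 2
  <= \sum_(t < T) \sum_(i < n) 2 * alpha t *
      dotv (gvec g (xit df g dg eta alpha W PB PP t i)) (lamit df g dg eta alpha W PB PP t i).
Proof.
move=> _ _ _ _ W_ds _ _ PP_proj alpha_ge0 _ eta_gt0.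
have PP_le y := proj_cone_dotvv_le y PP_proj (@in_orthantZ R m).
have := sum_dual_increment_ge0 df g dg eta alpha PB W_ds PP_le T.
set A := \sum_(t < T) \sum_(i < n) 2 * alpha t * _.
set B := \sum_(t < T) \sum_(i < n) alpha t * eta * _.
set C := \sum_(t < T) \sum_(i < n) alpha t ^+ 2 * _.
have -> : \sum_(t < T) \sum_i dual_increment df g dg eta alpha W PB PP t i = A - 2 * B + C.
  rewrite /A /B /C mulr_sumr -!sumrB -!big_split; apply: eq_bigr => t _.
  rewrite mulr_sumr -!sumrB -!big_split; apply: eq_bigr => i _.
  by rewrite /dual_increment !normv_sq.
have B_ge0 : 0 <= B.
  by do 2!apply: sumr_ge0 => ? _; rewrite mulr_ge0 ?sqr_ge0 // mulr_ge0 // ltW.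
lra.
Qed.
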